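(* Let $I$ be a finite set of positive integers. Then there are real numbers $c_k$, $k\in I\cup\{0\}$, such that $$d(I;z)=c_0+\sum_{k\in I}c_k\, z^{\underline{k}},$$ and $\frac{1}{k!}\le |c_k|\le 1$ for every $k\in I\cup\{0\}$.
   Context: $z^{\underline{k}}=z(z-1)\cdots(z-k+1)$ is the falling factorial ($z^{\underline 0}=1$). $d(I;z)$ is the descent polynomial: the unique polynomial whose value at each integer $n>\max(I\cup\{0\})$ is the number of permutations $\pi\in\mathfrak S_n$ with $\{j\mid\pi_j>\pi_{j+1}\}=I$. *)

From HB Require Import structures.
From mathcomp Require Import all_boot all_order all_algebra all_fingroup.
Set Implicit Arguments. Unset Strict Implicit. Unset Printing Implicit Defensive.
Import Order.TTheory GRing.Theory Num.Theory.
Local Open Scope ring_scope.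

(* Position j (1-indexed, 1 <= j <= n-1) is a descent of s : 'S_n, i.e.
   pi_j > pi_{j+1}, where pi_j := s (j-1) (0-indexed permutation on 'I_n). *)
Definition is_desc (n : nat) (s : 'S_n) (j : nat) : bool :=
  [exists i : 'I_n, [exists k : 'I_n,
     [&& i.+1 == j, val k == j & (val (s k) < val (s i))%N]]].

(* number of permutations of S_n whose descent set is exactly I
   (descent positions always lie in 1..n-1, so quantifying over j < n suffices
    when max I < n) *)
Definition descent_count (I : seq nat) (n : nat) : nat :=
  #|[set s : 'S_n | [forall j : 'I_n, (val j \in I) == is_desc s j]]|.

Definition falling (R : nzRingType) (k : nat) : {poly R} :=
  \prod_(i < k) ('X - (i%:R)%:P).

Definition is_descent_poly (R : nzRingType) (I : seq nat) (p : {poly R}) : Prop :=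
  forall n : nat, (\max_(i <- I) i < n)%N -> p.[n%:R] = (descent_count I n)%:R.

From HB Require Import structures.
From mathcomp Require Import all_boot all_order all_algebra all_fingroup zify.
Import Order.TTheory GRing.Theory Num.Theory.
Set Implicit Arguments. Unset Strict Implicit. Unset Printing Implicit Defensive.

(* Let m be the largest element of I and J = I \ {m}.  For n > m, a permutation
   of S_n whose descents agree with J except possibly at m has no descent after
   m, so it is determined by the set A of its first m values and by the relative
   order of these values, a permutation of S_m with descent set J; every such
   pair occurs.  Splitting according to whether m is a descent gives
   d(I;n) + d(J;n) = C(n,m) d(J;m), i.e.
     d(I;z) = d(J;m)/m! z^{\underline m} - d(J;z).
   By induction, the coefficients of d(I;z) in the falling factorial basis are,
   up to sign, 1 and the ratios d(J_k;k)/k! for k in I, with 1 <= d(J_k;k) <= k!. *)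

Section SortedEnum.
Variables (n : nat) (A : {set 'I_n}).

Let ltn_ord_trans : transitive (relpre (@nat_of_ord n) ltn).
Proof. by move=> j i k; apply: ltn_trans. Qed.

Lemma sorted_enum_ord : sorted (relpre val ltn) (enum A).
Proof.
rewrite /enum_mem -enumT (sorted_filter ltn_ord_trans) //.
by have := iota_ltn_sorted 0 n; rewrite -val_enum_ord sorted_map.
Qed.

Lemma ltn_nth_enum x0 a b : a < #|A| -> b < #|A| ->
  (nth x0 (enum A) a < nth x0 (enum A) b) = (a < b).
Proof.
rewrite cardE => ha hb.
have lt_nth := sorted_ltn_nth ltn_ord_trans x0 sorted_enum_ord.
case: (ltngtP a b) => [ab|ba|->]; rewrite ?ltnn //; first exact: lt_nth.
by apply/negbTE; rewrite -leqNgt ltnW //; apply: lt_nth.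
Qed.

Lemma ltn_index_enum x y : x \in A -> y \in A ->
  (index x (enum A) < index y (enum A)) = (x < y).
Proof.
rewrite -[x \in A]mem_enum -[y \in A]mem_enum => xA yA.
rewrite -[in RHS](nth_index x xA) -[in RHS](nth_index x yA).
by rewrite ltn_nth_enum ?cardE ?index_mem.
Qed.

End SortedEnum.

Section WordPerm.
Variable n : nat.

Lemma nth_word_inj (w : seq 'I_n) :
  uniq w && (size w == n) -> injective (fun i : 'I_n => nth i w i).
Proof.
case/andP=> w_uniq /eqP size_w i j; rewrite (set_nth_default i j) ?size_w //.
by move/eqP; rewrite nth_uniq ?size_w // => /eqP/val_inj.
Qed.

Definition word_perm (w : seq 'I_n) : 'S_n :=
  if @idP (uniq w && (size w == n)) is ReflectT w_ok then perm (nth_word_inj w_ok)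
  else 1%g.

Lemma word_permE w i : uniq w -> size w = n -> word_perm w i = nth i w i.
Proof.
move=> w_uniq /eqP size_w; rewrite /word_perm.
by case: {-}_ / idP => [w_ok|]; [rewrite permE | rewrite w_uniq size_w].
Qed.

Lemma word_permK (s : 'S_n) : word_perm [seq s i | i <- enum 'I_n] = s.
Proof.
apply/permP => i; rewrite word_permE ?size_map ?size_enum_ord.
- by rewrite (nth_map i) ?size_enum_ord // nth_ord_enum.
- by rewrite (map_inj_uniq perm_inj) enum_uniq.
- by rewrite -enumT size_enum_ord.
Qed.

End WordPerm.

Lemma is_descE n (s : 'S_n) (i k : 'I_n) : val k = i.+1 -> is_desc s k = (s k < s i).
Proof.
move=> ki; apply/existsP/idP => [[i' /existsP[k' /and3P[/eqP i'k /eqP k'k]]]|lt_ki].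
  have -> : k' = k by apply: val_inj; rewrite k'k.
  by have -> : i' = i by apply/val_inj/succn_inj; rewrite i'k ki.
by exists i; apply/existsP; exists k; rewrite lt_ki -ki !eqxx.
Qed.

Lemma is_desc0 n (s : 'S_n) : is_desc s 0 = false.
Proof. by apply/existsP => -[i /existsP[k /and3P[]]]. Qed.

Lemma is_desc_ge n (s : 'S_n) j : n <= j -> is_desc s j = false.
Proof.
move=> nj; apply/existsP => -[i /existsP[k /and3P[_ /eqP kj _]]].
by move: (ltn_ord k); rewrite kj ltnNge nj.
Qed.

(* [glue A t] is the permutation whose one-line notation lists the elements of
   A in the relative order t, followed by the complement of A in increasing
   order; [prefix_set] and [prefix_std] recover A and t.  The default values of
   [nth] in [glue_word] are junk. *)
Section Glue.
Variables (n m : nat) (le_mn : m <= n).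
Local Notation widen := (widen_ord le_mn).

Lemma take_enum_ord : take m (enum 'I_n) = map widen (enum 'I_m).
Proof.
apply: (inj_map val_inj); rewrite map_take val_enum_ord take_iota (minn_idPl le_mn).
by rewrite -map_comp (eq_map (_ : val \o widen =1 val)) // val_enum_ord.
Qed.

Lemma mem_drop_enum_ord i : (i \in drop m (enum 'I_n)) = (m <= i).
Proof.
rewrite -(mem_map val_inj) map_drop val_enum_ord drop_iota mem_iota add0n.
by rewrite subnKC // ltn_ord andbT.
Qed.

Definition glue_word (A : {set 'I_n}) (t : 'S_m) : seq 'I_n :=
  [seq nth (widen k) (enum A) (t k) | k <- enum 'I_m] ++ enum (~: A).

Definition glue A t : 'S_n := word_perm (glue_word A t).

Definition prefix_set (s : 'S_n) : {set 'I_n} := [set s (widen k) | k : 'I_m].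

Lemma mem_prefix_set (s : 'S_n) i : (s i \in prefix_set s) = (i < m).
Proof.
apply/imsetP/idP => [[k _ /perm_inj ->] | lt_im]; first by rewrite /= ltn_ord.
by exists (Ordinal lt_im) => //; congr (s _); apply: val_inj.
Qed.

Lemma card_prefix_set (s : 'S_n) : #|prefix_set s| = m.
Proof.
by rewrite card_imset ?card_ord // => k l /perm_inj [] /val_inj.
Qed.

Lemma index_prefix_set_lt (s : 'S_n) k : index (s (widen k)) (enum (prefix_set s)) < m.
Proof.
by rewrite -[m in _ < m](card_prefix_set s) cardE index_mem mem_enum mem_prefix_set /=.
Qed.

Definition prefix_rank (s : 'S_n) k : 'I_m := Ordinal (index_prefix_set_lt s k).

Lemma prefix_rank_inj (s : 'S_n) : injective (prefix_rank s).
Proof.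
move=> k l /(congr1 val) /(congr1 (nth (s (widen k)) (enum (prefix_set s)))).
by rewrite !nth_index ?mem_enum ?mem_prefix_set //= => /perm_inj [] /val_inj.
Qed.

Definition prefix_std (s : 'S_n) : 'S_m := perm (@prefix_rank_inj s).

Lemma prefix_stdE (s : 'S_n) k :
  prefix_std s k = index (s (widen k)) (enum (prefix_set s)) :> nat.
Proof. by rewrite permE. Qed.

Lemma is_desc_prefix_std (s : 'S_n) j : j < m -> is_desc (prefix_std s) j = is_desc s j.
Proof.
case: j => [|j] lt_jm; first by rewrite !is_desc0.
have lt_j := ltnW lt_jm.
rewrite (@is_descE _ _ (Ordinal lt_j) (Ordinal lt_jm)) //.
rewrite (@is_descE _ _ (widen (Ordinal lt_j)) (widen (Ordinal lt_jm))) //.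
by rewrite !prefix_stdE ltn_index_enum ?mem_prefix_set.
Qed.

Section GlueSet.
Variables (A : {set 'I_n}) (t : 'S_m).
Hypothesis card_A : #|A| = m.

Let size_enumA : size (enum A) = m.
Proof. by rewrite -cardE. Qed.

Let card_setCA : #|~: A| = n - m.
Proof. by rewrite -[in RHS](card_ord n) -(cardsC A) card_A addKn. Qed.

Lemma glue_word_uniq : uniq (glue_word A t).
Proof.
rewrite cat_uniq enum_uniq andbT; apply/andP; split.
  rewrite map_inj_in_uniq ?enum_uniq // => k l _ _.
  rewrite (set_nth_default (widen k) (widen l)) ?size_enumA //.
  move/eqP; rewrite nth_uniq ?enum_uniq ?size_enumA //.
  by move/eqP/val_inj/perm_inj.
apply/hasPn => y; rewrite mem_enum inE => yNA; apply/mapP => -[k _ y_nth].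
by move: yNA; rewrite y_nth -mem_enum mem_nth // size_enumA.
Qed.

Lemma size_glue_word : size (glue_word A t) = n.
Proof.
rewrite size_cat size_map size_enum_ord -cardE -card_A cardsC.
by rewrite card_ord.
Qed.

Lemma glue_widen x0 k : glue A t (widen k) = nth x0 (enum A) (t k).
Proof.
rewrite word_permE ?glue_word_uniq ?size_glue_word // nth_cat size_map size_enum_ord.
rewrite /= ltn_ord (nth_map k) ?size_enum_ord //= nth_ord_enum.
by rewrite (set_nth_default x0) ?size_enumA.
Qed.

Lemma glue_ge x0 (i : 'I_n) : m <= i -> glue A t i = nth x0 (enum (~: A)) (i - m).
Proof.
move=> le_mi; rewrite word_permE ?glue_word_uniq ?size_glue_word //.
rewrite nth_cat size_map size_enum_ord ltnNge le_mi /= (set_nth_default x0) //.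
by rewrite -cardE card_setCA ltn_sub2r // (leq_ltn_trans le_mi).
Qed.

Lemma is_desc_glue_lt j : j < m -> is_desc (glue A t) j = is_desc t j.
Proof.
case: j => [|j] lt_jm; first by rewrite !is_desc0.
have lt_j := ltnW lt_jm.
rewrite (@is_descE _ _ (Ordinal lt_j) (Ordinal lt_jm)) //.
rewrite (@is_descE _ _ (widen (Ordinal lt_j)) (widen (Ordinal lt_jm))) //.
by rewrite !(glue_widen (widen (Ordinal lt_j))) ltn_nth_enum ?card_A.
Qed.

Lemma is_desc_glue_gt j : m < j -> is_desc (glue A t) j = false.
Proof.
move=> lt_mj; case: (leqP n j) => [/is_desc_ge // | lt_jn].
case: j lt_mj lt_jn => [//|j] lt_mj lt_jn; have lt_j := ltnW lt_jn.
rewrite (@is_descE _ _ (Ordinal lt_j) (Ordinal lt_jn)) //.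
rewrite !(glue_ge (Ordinal lt_j)) ?(ltnW lt_mj) //= ltn_nth_enum ?card_setCA.
- by rewrite ltnNge leq_sub2r.
all: exact: ltn_sub2r (ltn_trans lt_mj lt_jn) _.
Qed.

Lemma prefix_set_glue : prefix_set (glue A t) = A.
Proof.
apply/eqP; rewrite eqEcard card_prefix_set card_A leqnn andbT.
apply/subsetP => _ /imsetP[k _ ->]; rewrite (glue_widen (widen k)) //.
by rewrite -mem_enum mem_nth // size_enumA.
Qed.

Lemma prefix_std_glue : prefix_std (glue A t) = t.
Proof.
apply/permP => k; apply/val_inj => /=.
rewrite prefix_stdE prefix_set_glue (glue_widen (widen k)) //.
by rewrite index_uniq ?enum_uniq ?size_enumA.
Qed.
End GlueSet.

Lemma sorted_map_drop (s : 'S_n) : (forall j, m < j -> ~~ is_desc s j) ->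
  sorted (relpre val ltn) (map s (drop m (enum 'I_n))).
Proof.
move=> no_desc; case E: (drop m (enum 'I_n)) => [//|i0 w]; rewrite -E.
apply/(sortedP (s i0)) => i; rewrite size_map size_drop size_enum_ord => lt_i.
have lt_i0 : m + i < n by lia.
have lt_i1 : m + i.+1 < n by lia.
have nth_drop_ord k (lt_k : m + k < n) : nth i0 (drop m (enum 'I_n)) k = Ordinal lt_k.
  by apply/val_inj; rewrite /= nth_drop nth_enum_ord.
rewrite !(nth_map i0) ?size_drop ?size_enum_ord ?(ltnW lt_i) // !nth_drop_ord /=.
have /no_desc : m < m + i.+1 by lia.
rewrite (@is_descE _ _ (Ordinal lt_i0) (Ordinal lt_i1)) /= ?addnS //.
by rewrite -leqNgt leq_eqVlt => /orP[/eqP/val_inj/perm_inj/(congr1 val)/= ?|//]; lia.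
Qed.

Lemma glue_prefix_std (s : 'S_n) : (forall j, m < j -> ~~ is_desc s j) ->
  glue (prefix_set s) (prefix_std s) = s.
Proof.
move=> no_desc; rewrite -[RHS]word_permK; congr word_perm.
rewrite -[enum 'I_n](cat_take_drop m) map_cat take_enum_ord -map_comp.
congr (_ ++ _).
  apply/eq_map => k /=.
  by rewrite prefix_stdE nth_index // mem_enum mem_prefix_set /=.
apply: irr_sorted_eq; [exact: ltn_trans | exact: ltnn | exact: sorted_enum_ord |
  exact: sorted_map_drop |].
move=> y; rewrite mem_enum inE -[y](permKV s) mem_prefix_set (mem_map perm_inj).
by rewrite mem_drop_enum_ord -leqNgt.
Qed.
End Glue.

Definition desc_set (J : seq nat) n : {set 'S_n} :=
  [set s | [forall j : 'I_n, (val j \in J) == is_desc s j]].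

Definition desc_set_except (J : seq nat) m n : {set 'S_n} :=
  [set s | [forall j : 'I_n, (val j != m) ==> ((val j \in J) == is_desc s j)]].

Lemma descent_countE J n : descent_count J n = #|desc_set J n|.
Proof. by []. Qed.

Section DescSetExcept.
Variables (J : seq nat) (m n : nat) (le_mn : m <= n).
Hypothesis J_lt : forall j, j \in J -> j < m.

Lemma desc_set_except_no_desc s :
  s \in desc_set_except J m n -> forall j, m < j -> ~~ is_desc s j.
Proof.
rewrite inE => /forallP s_desc j lt_mj.
have [/is_desc_ge -> // | lt_jn] := leqP n j.
move/implyP: (s_desc (Ordinal lt_jn)); rewrite /= neq_ltn lt_mj orbT => /(_ isT) /eqP <-.
by apply/negP => /J_lt; rewrite ltnNge ltnW.
Qed.

Lemma prefix_std_desc_set s :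
  s \in desc_set_except J m n -> prefix_std le_mn s \in desc_set J m.
Proof.
rewrite !inE => /forallP s_desc; apply/forallP => j.
rewrite is_desc_prefix_std //; move/implyP: (s_desc (widen_ord le_mn j)); apply.
by rewrite /= neq_ltn ltn_ord.
Qed.

Lemma glue_desc_set_except (A : {set 'I_n}) t :
  #|A| = m -> t \in desc_set J m -> glue le_mn A t \in desc_set_except J m n.
Proof.
move=> card_A; rewrite !inE => /forallP t_desc; apply/forallP => j.
apply/implyP => j_neq_m; case: (ltngtP j m) => [lt_jm | lt_mj | j_m].
- by rewrite is_desc_glue_lt //; exact: t_desc (Ordinal lt_jm).
- by rewrite is_desc_glue_gt // eqbF_neg; apply/negP => /J_lt; rewrite ltnNge ltnW.
- by case/negP: j_neq_m; apply/eqP.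
Qed.

Theorem card_desc_set_except :
  #|desc_set_except J m n| = 'C(n, m) * #|desc_set J m|.
Proof.
pose parts s := (prefix_set le_mn s, prefix_std le_mn s).
have parts_inj : {in desc_set_except J m n &, injective parts}.
  move=> s1 s2 /desc_set_except_no_desc s1_inc /desc_set_except_no_desc s2_inc.
  case=> eq_set eq_std; rewrite -(glue_prefix_std le_mn s1_inc).
  by rewrite -(glue_prefix_std le_mn s2_inc) eq_set eq_std.
rewrite -(card_in_imset parts_inj).
have -> : parts @: desc_set_except J m n =
          setX [set A : {set 'I_n} | #|A| == m] (desc_set J m).
  apply/setP => -[A t]; rewrite in_setX [A \in _]inE /=.
  apply/imsetP/andP => [[s sE [-> ->]] | [/eqP card_A tD]].
    by rewrite card_prefix_set eqxx prefix_std_desc_set.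
  exists (glue le_mn A t); first exact: glue_desc_set_except.
  by rewrite /parts prefix_set_glue ?prefix_std_glue.
by rewrite cardsX card_draws card_ord.
Qed.
End DescSetExcept.

Lemma mem_desc_set J' J m n (s : 'S_n) : m < n ->
    (forall j, j != m -> (j \in J') = (j \in J)) ->
  (s \in desc_set J' n) = (s \in desc_set_except J m n) && ((m \in J') == is_desc s m).
Proof.
move=> lt_mn eq_J; rewrite !inE.
apply/forallP/andP => [s_desc | [/forallP s_desc s_desc_m] j].
  split; last exact: s_desc (Ordinal lt_mn).
  by apply/forallP => j; apply/implyP => /eq_J <-; exact: s_desc.
have [j_m | j_neq_m] := eqVneq (val j) m.
  by have -> : j = Ordinal lt_mn by apply: val_inj.
by rewrite eq_J //; move/implyP: (s_desc j); apply.
Qed.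

Lemma descent_count_cons J m n : (forall j, j \in J -> j < m) -> m < n ->
  descent_count (m :: J) n + descent_count J n = 'C(n, m) * descent_count J m.
Proof.
move=> J_lt lt_mn; rewrite !descent_countE -(card_desc_set_except (ltnW lt_mn) J_lt).
rewrite -(cardsID [set s : 'S_n | is_desc s m] (desc_set_except J m n)).
have m_notin_J : (m \in J) = false by apply/negP => /J_lt; rewrite ltnn.
congr (_ + _); apply: eq_card => s.
- rewrite in_setI (@mem_desc_set _ J m) ?inE ?eqxx //.
  by move=> j /negbTE j_neq_m; rewrite inE j_neq_m.
- by rewrite in_setD (@mem_desc_set _ J m) ?m_notin_J // !inE andbC eq_sym eqbF_neg.
Qed.

Lemma descent_count_le J m : descent_count J m <= m`!.
Proof. by rewrite descent_countE -card_Sn max_card. Qed.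

Lemma descent_count_gt0 J m : (forall j, j \in J -> 0 < j < m) -> 0 < descent_count J m.
Proof.
elim: m J => [|m IHm] J J_bounds.
  by apply/card_gt0P; exists 1%g; rewrite inE; apply/forallP => -[].
pose J' := [seq j <- J | j != m].
have J'_bounds j : j \in J' -> 0 < j < m.
  rewrite mem_filter => /andP[j_neq_m /J_bounds /andP[-> lt_jm]].
  by rewrite ltn_neqAle j_neq_m -ltnS.
have /card_gt0P[t tD] := IHm J' J'_bounds.
(* s lists the values other than x0 in the relative order t, then x0: it has a
   descent at m iff x0 = 0. *)
pose x0 : 'I_m.+1 := if m \in J then ord0 else ord_max.
have card_A : #|[set~ x0]| = m by rewrite cardsC1 card_ord.
pose s := glue (leqnSn m) [set~ x0] t.
have sE : s \in desc_set_except J' m m.+1.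
  by apply: glue_desc_set_except => // j /J'_bounds /andP[].
apply/card_gt0P; exists s; rewrite (@mem_desc_set _ J' m) ?sE //=; last first.
  by move=> j j_neq_m; rewrite mem_filter j_neq_m.
have [m0 | m_gt0] := posnP m.
  by subst m; rewrite is_desc0 eqbF_neg; apply/negP => /J_bounds.
have lt_pm : m.-1 < m.+1 by rewrite prednK // ltnW.
rewrite (@is_descE _ _ (Ordinal lt_pm) ord_max) /= ?prednK //.
have -> : s ord_max = x0.
  by rewrite (glue_ge _ _ card_A x0) //= subnn setCK enum_set1.
have : s (Ordinal lt_pm) \in [set~ x0].
  by rewrite -(prefix_set_glue _ t card_A) mem_prefix_set /= prednK.
rewrite /x0 in_setC1; case: ifP => _ s_neq.
  by rewrite lt0n; apply: contra_neq s_neq => s_eq0; apply: val_inj.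
by rewrite eq_sym eqbF_neg -leqNgt -ltnS.
Qed.

Lemma descent_count_nil n : descent_count [::] n = 1.
Proof.
have count0 : descent_count [::] 0 = 1.
  rewrite descent_countE -[1]/(0`!) -card_Sn; apply/eq_card => s.
  by rewrite inE; apply/forallP => -[].
case: n => [//|n]; have nil_lt j : j \in [::] -> j < 0 by [].
have := descent_count_cons nil_lt (ltn0Sn n); rewrite bin0 mul1n count0 => sum_eq.
apply/eqP; rewrite eqn_leq descent_count_gt0 // andbT.
by rewrite -[X in _ <= X]sum_eq leq_addl.
Qed.

Local Open Scope ring_scope.

Lemma falling_nat (R : comNzRingType) k n : (k <= n)%N ->
  (falling R k).[n%:R] = (n ^_ k)%:R.
Proof.
move=> le_kn; rewrite /falling horner_prod ffact_prod natr_prod.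
apply: eq_bigr => i _; rewrite hornerXsubC natrB //.
exact: leq_trans (ltnW (ltn_ord i)) le_kn.
Qed.

Lemma descent_poly_unique (R : numDomainType) I (p q : {poly R}) :
  is_descent_poly I p -> is_descent_poly I q -> p = q.
Proof.
move=> p_desc q_desc; apply/eqP; rewrite -subr_eq0; apply/negPn/negP => pq_neq0.
set M := (\max_(i <- I) i)%N.
pose roots := [seq (M.+1 + i)%:R : R | i <- iota 0 (size (p - q))].
suff : (size roots < size (p - q)%R)%N by rewrite size_map size_iota ltnn.
apply: max_poly_roots pq_neq0 _ _.
  apply/allP => _ /mapP[i _ ->].
  by rewrite /root hornerD hornerN p_desc ?q_desc ?subrr // ltnS leq_addr.
by rewrite map_inj_uniq ?iota_uniq // => i j /eqP; rewrite eqr_nat eqn_add2l => /eqP.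
Qed.

Lemma perm_is_descent_poly (R : nzRingType) I I' (p : {poly R}) :
  perm_eq I I' -> is_descent_poly I p -> is_descent_poly I' p.
Proof.
move=> eq_II' p_desc n; rewrite -(perm_big _ eq_II') => /p_desc ->.
congr _%:R; apply: eq_card => s; rewrite !inE.
by apply: eq_forallb => j; rewrite (perm_mem eq_II').
Qed.

Lemma is_descent_poly_cons (R : numFieldType) J m (q : {poly R}) :
    (forall j, j \in J -> (j < m)%N) -> is_descent_poly J q ->
  is_descent_poly (m :: J) ((descent_count J m)%:R / (m`!)%:R *: falling R m - q).
Proof.
move=> J_lt q_desc n; rewrite big_cons gtn_max => /andP[lt_mn lt_Jn].
rewrite hornerD hornerN hornerZ falling_nat ?(ltnW lt_mn) // q_desc //.
have count_eq := descent_count_cons J_lt lt_mn.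
rewrite -[descent_count (m :: J) n](addnK (descent_count J n)) count_eq natrB; last first.
  by rewrite -count_eq leq_addl.
have fact_neq0 : (m`!)%:R != 0 :> R by rewrite pnatr_eq0 -lt0n fact_gt0.
by rewrite -bin_ffact !natrM mulrCA divfK.
Qed.

Lemma descent_count_ratio_bounds (R : numFieldType) J m :
    (forall j, j \in J -> (0 < j < m)%N) ->
  1 / (m`!)%:R <= `|(descent_count J m)%:R / (m`!)%:R : R| /\
  `|(descent_count J m)%:R / (m`!)%:R : R| <= 1.
Proof.
move=> J_bounds; have fact_gt0 : 0 < (m`!)%:R :> R by rewrite ltr0n fact_gt0.
rewrite ger0_norm ?divr_ge0 ?ler0n //; split.
  by rewrite ler_pM2r ?invr_gt0 // ler1n descent_count_gt0.
by rewrite ler_pdivrMr // mul1r ler_nat descent_count_le.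
Qed.

Lemma descent_poly_falling_expansion (R : numFieldType) (I : seq nat) :
    sorted gtn I -> all (fun k => 0 < k)%N I ->
  exists c : nat -> R,
    is_descent_poly I ((c 0%N)%:P + \sum_(k <- I) c k *: falling R k) /\
    (forall k, k \in 0%N :: I -> 1 / (k`!)%:R <= `|c k| /\ `|c k| <= 1).
Proof.
elim: I => [|m J IH] /= I_sorted I_pos.
  exists (fun=> 1); split => [n _ | k].
    by rewrite big_nil addr0 hornerC descent_count_nil.
  by rewrite inE => /eqP ->; rewrite fact0 divr1 normr1 lexx.
move: I_sorted I_pos; rewrite (path_sortedE (rev_trans ltn_trans)).
case/andP=> /allP J_lt J_sorted.
case/andP=> m_gt0 J_pos; have [c [c_desc c_bounds]] := IH J_sorted J_pos.
have J_bounds j : j \in J -> (0 < j < m)%N.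
  by move=> jJ; rewrite (allP J_pos j jJ); exact: J_lt.
pose d : R := (descent_count J m)%:R / (m`!)%:R.
exists (fun k => if k == m then d else - c k); split.
  have -> : ((if 0 == m then d else - c 0%N)%:P +
      \sum_(k <- m :: J) (if k == m then d else - c k) *: falling R k) =
      d *: falling R m - ((c 0%N)%:P + \sum_(k <- J) c k *: falling R k).
    rewrite big_cons eqxx eq_sym (negbTE (lt0n_neq0 m_gt0)) polyCN opprD -sumrN.
    rewrite addrCA (eq_big_seq (fun k => - (c k *: falling R k))) // => k /J_lt lt_km.
    by rewrite (ltn_eqF lt_km) scaleNr.
  exact: is_descent_poly_cons.
move=> k; have [-> _ | k_neq_m] := eqVneq k m.
  exact: descent_count_ratio_bounds J_bounds.
by rewrite normrN !inE (negbTE k_neq_m) => /c_bounds.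
Qed.

Unset Implicit Arguments.
Theorem lemma4p12 (R : realFieldType) (I : seq nat)
    (hI : uniq I) (hpos : all (fun k => (0 < k)%N) I) :
  (exists p : {poly R}, is_descent_poly I p) /\
  (forall p : {poly R}, is_descent_poly I p ->
     exists c : nat -> R,
       p = (c 0%N)%:P + \sum_(k <- I) c k *: falling R k /\
       (forall k : nat, k \in 0%N :: I ->
          1 / (k`!)%:R <= `|c k| /\ `|c k| <= 1)).
Proof.
have sort_perm : perm_eq (sort geq I) I by rewrite perm_sort.
have sort_sorted : sorted gtn (sort geq I).
  by rewrite gtn_sorted_uniq_geq sort_uniq hI sort_sorted //; exact: geq_total.
have [|c [c_desc c_bounds]] := descent_poly_falling_expansion R sort_sorted.
  by rewrite (perm_all _ sort_perm).
rewrite (perm_big _ sort_perm) in c_desc.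
have {}c_desc := perm_is_descent_poly sort_perm c_desc.
split=> [|p p_desc]; first by eexists; exact: c_desc.
exists c; split; first exact: descent_poly_unique p_desc c_desc.
have mem_sort : 0%N :: sort geq I =i 0%N :: I by apply: perm_mem; rewrite perm_cons.
by move=> k; rewrite -mem_sort; exact: c_bounds.
Qed.
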